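(* Let $\Omega\subset\mathbb{R}^d$ be a non-empty, bounded, open set and let $\Phi\colon\mathbb{R}^N_+\to[0,\infty)$ satisfy (Φ.3). Then every $1$-adjusted $(1,\Phi)$-eigen-$N$-cluster of $\Omega$ is a $\Phi$-Cheeger $N$-cluster of $\Omega$.
   Context: All sets are Lebesgue measurable; $|E|$ is Lebesgue measure and $P(E)$ the distributional (De Giorgi) perimeter; set inclusions and disjointness are understood up to null sets. For $F\subset\mathbb{R}^d$, $h(F)=\inf\{P(E)/|E| : E\subset F,\ |E|>0\}\in[0,\infty]$. An $N$-set of $F$ is an $N$-tuple $\mathcal E=(\mathcal E_1,\dots,\mathcal E_N)$ with $\mathcal E_i\subset F$, $|\mathcal E_i|>0$, and $|\mathcal E_i\cap\mathcal E_j|=0$ for $i\neq j$; it is an $N$-cluster if moreover $P(\mathcal E_i)<\infty$ for all $i$. For an $N$-set $\mathcal E$ of $F$ let $F^{\mathcal E}_i=\bigcup_{j\ne i}\mathcal E_j$; an $N$-cluster $\mathcal E$ of $F$ is $1$-adjusted if $P(\mathcal E_i)/|\mathcal E_i|=h(F\setminus F^{\mathcal E}_i)$ for every $i$. $\mathbb{R}^N_+=\{v\in\mathbb{R}^N: v_i\ge0\}$ with componentwise order ($v\le w$ iff $v_i\le w_i$ for all $i$). (Φ.3): $v\le w\Rightarrow\Phi(v)\le\Phi(w)$. $H^{\Phi,N}(F)=\inf\{\Phi(P(\mathcal E_1)/|\mathcal E_1|,\dots,P(\mathcal E_N)/|\mathcal E_N|) : \mathcal E \text{ an } N\text{-cluster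 of } F\}$, minimizers being $\Phi$-Cheeger $N$-clusters. $\mathscr{L}^{\Phi,N}_{1,1}(F)=\inf\{\Phi(h(\mathcal E_1),\dots,h(\mathcal E_N)) : \mathcal E \text{ an } N\text{-set of } F\}$; a minimizer which is an $N$-cluster is a $(1,\Phi)$-eigen-$N$-cluster. *)

From HB Require Import structures.
From mathcomp Require Import all_boot all_order all_algebra.
From mathcomp Require Import all_classical all_reals all_analysis.
Set Implicit Arguments. Unset Strict Implicit. Unset Printing Implicit Defensive.
Import Order.TTheory GRing.Theory Num.Theory.
Import numFieldNormedType.Exports.
Local Open Scope classical_set_scope.
Local Open Scope ring_scope.

Section Lebesgue.
Variables (R : realType) (d : nat).

Definition coord (x : 'rV[R]_d) (i : 'I_d) : R := x ord0 i.

Definition box (a b : 'rV[R]_d) : set 'rV[R]_d :=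
  [set x | forall i, coord a i <= coord x i /\ coord x i < coord b i].

Definition box_vol (a b : 'rV[R]_d) : R := \prod_(i < d) (coord b i - coord a i).

Definition boxes : set (set 'rV[R]_d) :=
  [set B | exists a b, (forall i, coord a i <= coord b i) /\ B = box a b].

(** elementary volume: on nonempty boxes the box volume, 0 on the empty set,
    +oo on any other set (so such sets are useless in covers) *)
Definition box_content (A : set 'rV[R]_d) : \bar R :=
  if `[< A = set0 >] then 0%E
  else ereal_inf [set r | exists a b, [/\ (forall i, coord a i <= coord b i),
                                          A = box a b & r = (box_vol a b)%:E]].

Lemma box_content0 : box_content set0 = 0%E.
Proof. by rewrite /box_content asboolT. Qed.

Lemma box_content_ge0 A : (0 <= box_content A)%E.
Proof.
rewrite /box_content; case: asboolP => // _.
apply: le_ereal_inf_tmp => _ [a [b [hab _ ->]]].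
rewrite lee_fin; apply: prodr_ge0 => i _; rewrite subr_ge0; exact: hab.
Qed.

Definition RdB := g_sigma_algebraType boxes.

Definition leb_outer : set RdB -> \bar R := mu_ext (box_content : set RdB -> _).

HB.instance Definition _ := isOuterMeasure.Build R RdB leb_outer
  (@mu_ext0 _ _ _ (box_content : set RdB -> _) box_content0 box_content_ge0)
  (mu_ext_ge0 (box_content_ge0 : forall A : set RdB, _))
  (le_mu_ext (box_content : set RdB -> _))
  (mu_ext_sigma_subadditive (box_content_ge0 : forall A : set RdB, _)).

Definition Rd := caratheodory_type leb_outer.

End Lebesgue.

Notation leb R d :=
  (@leb_outer R d : set (caratheodory_type (@leb_outer R d)) -> \bar R) (only parsing).


Local Open Scope ereal_scope.

Section Perimeter.
Variables (R : realType) (d : nat).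

Definition e_ (i : 'I_d) : 'rV[R]_d := delta_mx ord0 i.

Definition C1c (phi : 'rV[R]_d -> 'rV[R]_d) : Prop :=
  [/\ forall i x, derivable phi x (e_ i),
      forall i, continuous (fun x => 'D_(e_ i) phi x)
    & compact (closure [set x | phi x != 0%R])].

Definition euclid_le1 (phi : 'rV[R]_d -> 'rV[R]_d) : Prop :=
  forall x, (\sum_(i < d) (phi x ord0 i) ^+ 2 <= 1)%R.

Definition divergence (phi : 'rV[R]_d -> 'rV[R]_d) (x : 'rV[R]_d) : R :=
  (\sum_(i < d) ('D_(e_ i) phi x) ord0 i)%R.

Definition perimeter (E : set (Rd R d)) : \bar R :=
  ereal_sup [set \int[leb R d]_(x in E) (divergence phi x)%:E |
              phi in [set phi | C1c phi /\ euclid_le1 phi]].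

End Perimeter.

Section Clusters.
Variables (R : realType) (d N : nat).
Local Notation Rd := (Rd R d).
Local Notation leb := (leb R d).
Local Notation P := (@perimeter R d).

Definition cheeger_h (F : set Rd) : \bar R :=
  ereal_inf [set P E / leb E | E in
    [set E : set Rd | [/\ measurable E, leb (E `\` F) = 0 & 0 < leb E]]].

Definition is_Nset (F : set Rd) (E : 'I_N -> set Rd) : Prop :=
  (forall i, [/\ measurable (E i), leb (E i `\` F) = 0 & 0 < leb (E i)]) /\
  (forall i j, i != j -> leb (E i `&` E j) = 0).

Definition is_Ncluster (F : set Rd) (E : 'I_N -> set Rd) : Prop :=
  is_Nset F E /\ (forall i, P (E i) < +oo).

Definition Fcompl (E : 'I_N -> set Rd) (i : 'I_N) : set Rd :=
  \bigcup_(j in [set j | j != i]) E j.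

Definition one_adjusted (F : set Rd) (E : 'I_N -> set Rd) : Prop :=
  is_Ncluster F E /\
  (forall i, P (E i) / leb (E i) = cheeger_h (F `\` Fcompl E i)).

(** Phi applied to a vector of extended reals: Phi(v) if all entries are finite,
    +oo otherwise (such entries never contribute to the infima below). *)
Definition PhiE (Phi : ('I_N -> R) -> R) (v : 'I_N -> \bar R) : \bar R :=
  if `[< forall i, v i \is a fin_num >] then (Phi (fun i => fine (v i)))%:E
  else +oo.

Definition H_PhiN (Phi : ('I_N -> R) -> R) (F : set Rd) : \bar R :=
  ereal_inf [set PhiE Phi (fun i => P (E i) / leb (E i)) | E in is_Ncluster F].

Definition Phi_Cheeger_cluster (Phi : ('I_N -> R) -> R) (F : set Rd)
  (E : 'I_N -> set Rd) : Prop :=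
  is_Ncluster F E /\ PhiE Phi (fun i => P (E i) / leb (E i)) = H_PhiN Phi F.

Definition L_PhiN (Phi : ('I_N -> R) -> R) (F : set Rd) : \bar R :=
  ereal_inf [set PhiE Phi (fun i => cheeger_h (E i)) | E in is_Nset F].

Definition eigen_cluster (Phi : ('I_N -> R) -> R) (F : set Rd)
  (E : 'I_N -> set Rd) : Prop :=
  is_Ncluster F E /\ PhiE Phi (fun i => cheeger_h (E i)) = L_PhiN Phi F.

End Clusters.

From HB Require Import structures.
From mathcomp Require Import all_boot all_order all_algebra.
From mathcomp Require Import all_classical all_reals all_analysis.
Import Order.TTheory GRing.Theory Num.Theory.
Import numFieldNormedType.Exports.
Local Open Scope classical_set_scope.
Local Open Scope ring_scope.

(* For a 1-adjusted cluster, [E_i] sits inside [Omega \ F_i] up to a null set,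
   so h(Omega \ F_i) <= h(E_i) <= P(E_i)/|E_i| = h(Omega \ F_i): the Cheeger
   ratios of [E] are its Cheeger constants.  Hence Phi(ratios of E) = L(Omega).
   On the other hand L <= H, since every cluster is an N-set whose Cheeger
   constants are bounded by its ratios and Phi is monotone.  So [E] attains H. *)

Section OuterMeasureNull.
Variables (T : Type) (R : realType) (mu : {outer_measure set T -> \bar R}).
Local Open Scope ereal_scope.

Lemma outer_measure_subU2_null (X A B : set T) :
  X `<=` A `|` B -> mu A = 0 -> mu B = 0 -> mu X = 0.
Proof.
move=> XAB A0 B0; apply/eqP; rewrite eq_le outer_measure_ge0 andbT.
rewrite -(adde0 0) -{1}A0 -B0.
exact: le_trans (le_outer_measure mu _ _ XAB) (outer_measureU2 mu A B).
Qed.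

Lemma outer_measure_bigcup_null (I : countType) (J : set I) (A : I -> set T) :
  (forall j, J j -> mu (A j) = 0) -> mu (\bigcup_(j in J) A j) = 0.
Proof.
move=> A0; pose F n := if pickle_inv n is Some j then
  (if `[< J j >] then A j else set0) else set0.
have JF : \bigcup_(j in J) A j `<=` \bigcup_n F n.
  move=> x [j Jj Ajx]; exists (pickle j) => //.
  by rewrite /F pickleK_inv asboolT.
have F0 n : mu (F n) = 0.
  rewrite /F; case: pickle_inv => [j|]; last exact: outer_measure0.
  by case: asboolP => [/A0|_] //; exact: outer_measure0.
apply/eqP; rewrite eq_le outer_measure_ge0 andbT.
apply: le_trans (le_outer_measure mu _ _ JF) _.
apply: le_trans (outer_measure_sigma_subadditive mu F) _.
by rewrite eseries0.
Qed.

End OuterMeasureNull.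

(* Stated for an abstract outer measure: with the concrete [leb R d],
   [integral0_eq] fails to infer the measure on [caratheodory_type]. *)
Lemma caratheodory_integral0_eq (T : pointedType) (R : realType)
    (mu : {outer_measure set T -> \bar R}) (D : set (caratheodory_type mu))
    (f : caratheodory_type mu -> \bar R) :
  (forall x, D x -> f x = 0%E) -> @integral _ (caratheodory_type mu) R mu D f = 0%E.
Proof. exact: integral0_eq. Qed.

Section Cheeger.
Variables (R : realType) (d : nat).
Local Notation Rd := (Rd R d).
Local Notation leb := (leb R d).
Local Notation P := (@perimeter R d).
Local Open Scope ereal_scope.

Lemma perimeter_ge0 (E : set Rd) : 0 <= P E.
Proof.
have D0 (i : 'I_d) (x : 'rV[R]_d) : 'D_(e_ R i) (cst (0%R : 'rV[R]_d)) x = 0%R.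
  exact: derive_cst.
apply: ereal_sup_ubound; exists (cst 0%R); last first.
  apply: caratheodory_integral0_eq => x _.
  by rewrite /divergence big1 // => i _; rewrite D0 mxE.
split; last by move=> x; rewrite big1 // => i _; rewrite mxE expr0n.
split=> [i x|i|]; first exact: derivable_cst.
  by rewrite (_ : (fun x => _) = cst 0%R); [exact: cst_continuous|exact/funext].
rewrite (_ : [set x | _] = set0) ?closure0; first exact: compact0.
by apply/seteqP; split=> x //=; rewrite eqxx.
Qed.

Lemma cheeger_h_ge0 (F : set Rd) : 0 <= cheeger_h F.
Proof.
apply: le_ereal_inf_tmp => _ [A _ <-].
by rewrite mule_ge0 ?perimeter_ge0 // inve_ge0 outer_measure_ge0.
Qed.

Lemma cheeger_h_le_ratio (A : set Rd) :
  measurable A -> 0 < leb A -> cheeger_h A <= P A / leb A.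
Proof.
move=> mA A_gt0; apply: ereal_inf_lbound; exists A => //.
by split; rewrite // setDv outer_measure0.
Qed.

Lemma le_cheeger_h (A B : set Rd) :
  leb (A `\` B) = 0 -> cheeger_h B <= cheeger_h A.
Proof.
move=> AB0; apply: ereal_inf_le_tmp => _ [E [mE EA0 E_gt0] <-].
exists E => //; split=> //.
apply: outer_measure_subU2_null EA0 AB0 => x [Ex nBx].
by have [Ax|] := pselect (A x); [right|left].
Qed.

End Cheeger.

Section Clusters.
Variables (R : realType) (d N : nat).
Local Notation Rd := (Rd R d).
Local Notation leb := (leb R d).
Local Notation P := (@perimeter R d).
Local Open Scope ereal_scope.

Lemma Nset_setD_Fcompl_null (F : set Rd) (E : 'I_N -> set Rd) i :
  is_Nset F E -> leb (E i `\` (F `\` Fcompl E i)) = 0.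
Proof.
move=> [EF EE]; have [_ EiF _] := EF i.
have EiEj0 : leb (\bigcup_(j in [set j | j != i]) (E i `&` E j)) = 0.
  by apply: outer_measure_bigcup_null => j /= ji; apply: EE; rewrite eq_sym.
apply: outer_measure_subU2_null EiF EiEj0 => x [Eix nFx].
have [Fx|] := pselect (F x); [right|by left].
have [[j ji Ejx]|nFc] := pselect (Fcompl E i x); first by exists j.
by have := nFx (conj Fx nFc).
Qed.

Lemma one_adjusted_ratioE (F : set Rd) (E : 'I_N -> set Rd) i :
  one_adjusted F E -> P (E i) / leb (E i) = cheeger_h (E i).
Proof.
move=> [[ENset _] adj]; have [mEi _ Ei_gt0] := ENset.1 i.
apply: le_anti; rewrite cheeger_h_le_ratio // andbT adj.
exact/le_cheeger_h/Nset_setD_Fcompl_null.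
Qed.

Section Monotone.
Variable Phi : ('I_N -> R) -> R.
Hypothesis Phi_mono : forall v w : 'I_N -> R,
  (forall i, 0 <= v i)%R -> (forall i, 0 <= w i)%R ->
  (forall i, v i <= w i)%R -> (Phi v <= Phi w)%R.

Lemma PhiE_le (v w : 'I_N -> \bar R) :
  (forall i, 0 <= v i) -> (forall i, v i <= w i) -> PhiE Phi v <= PhiE Phi w.
Proof.
move=> v0 vw; rewrite /PhiE.
case: (asboolP (forall i, w i \is a fin_num)) => wfin; last by rewrite leey.
have vfin i : v i \is a fin_num.
  by rewrite ge0_fin_numE // (le_lt_trans (vw i)) // -ge0_fin_numE ?wfin
    ?(le_trans (v0 i) (vw i)).
rewrite asboolT // lee_fin; apply: Phi_mono => i.
- exact: fine_ge0.
- exact: fine_ge0 (le_trans (v0 i) (vw i)).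
- exact: fine_le.
Qed.

Lemma L_PhiN_le_H_PhiN (F : set Rd) : L_PhiN Phi F <= H_PhiN Phi F.
Proof.
apply: le_ereal_inf_tmp => _ [E [ENset _] <-].
apply: (@le_trans _ _ (PhiE Phi (fun i => cheeger_h (E i)))).
  by apply: ereal_inf_lbound; exists E.
apply: PhiE_le => i; first exact: cheeger_h_ge0.
by have [mEi _ Ei_gt0] := ENset.1 i; exact: cheeger_h_le_ratio.
Qed.

End Monotone.
End Clusters.

Theorem mainTheorem2 (R : realType) (d N : nat) (Omega : set 'rV[R]_d)
  (Phi : ('I_N -> R) -> R) :
  Omega !=set0 -> bounded_set Omega -> open Omega ->
  (forall v : 'I_N -> R, (forall i, 0 <= v i) -> 0 <= Phi v) ->
  (forall v w : 'I_N -> R, (forall i, 0 <= v i) -> (forall i, 0 <= w i) ->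
     (forall i, v i <= w i) -> Phi v <= Phi w) ->
  forall E : 'I_N -> set (Rd R d),
    one_adjusted Omega E -> eigen_cluster Phi Omega E ->
    Phi_Cheeger_cluster Phi Omega E.
Proof.
move=> _ _ _ _ Phi_mono E adj [Ecl eig]; split=> //.
have ratioE : (fun i => perimeter (E i) / leb R d (E i))%E =
              (fun i => cheeger_h (E i)).
  by apply/funext => i; exact: one_adjusted_ratioE adj.
apply: le_anti; apply/andP; split; last by apply: ereal_inf_lbound; exists E.
by rewrite ratioE eig; exact: L_PhiN_le_H_PhiN.
Qed.
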